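(* Let $\mathcal{S}=(\mathscr{X},\nabla_{\mathcal{S}})$ be a non-commutative spacetime, $\mathscr{Y}$ a quantale, and $f:\mathscr{X}\to\mathscr{Y}$ a join-preserving strict monoidal map which is an order embedding ($f(a)\le f(b)$ implies $a\le b$) and has a left adjoint $f_!:\mathscr{Y}\to\mathscr{X}$. Then there exists $\nabla:\mathscr{Y}\to\mathscr{Y}$ such that $\mathcal{T}=(\mathscr{Y},\nabla)$ is a non-commutative spacetime and $f:\mathcal{S}\to\mathcal{T}$ is a logical geometric map.
   Context: A monoidal poset is a poset with a monoid structure whose multiplication is monotone in each argument. A quantale is a monoidal poset with all joins whose multiplication distributes over arbitrary joins in each argument. A monotone map between monoidal posets is oplax monoidal if $f(e)\le e$ and $f(a\otimes b)\le f(a)\otimes f(b)$, strict monoidal if equalities hold. A non-commutative spacetime is a pair $(\mathscr{X},\nabla)$ with $\mathscr{X}$ a quantale and $\nabla$ a join-preserving oplax monoidal endomap. Its implication is $a\to_{\mathcal{S}}b=\Box(a\Rightarrow b)$, where $\Box$ is the right adjoint of $\nabla$ and $\Rightarrow$ the right adjoint of $a\otimes(-)$; equivalently $a\otimes\nabla b\le c$ iff $b\le a\to_{\mathcal{S}}c$. A geometric map $f:(\mathscr{X},\nabla_{\mathcal{S}})\to(\mathscr{Y},\nabla_{\mathcal{T}})$ is a join-preserving strict monoidal map with $f\nabla_{\mathcal{S}}=\nabla_{\mathcal{T}}f$; it is logical if moreover $f(a\to_{\mathcal{S}}b)=f(a)\to_{\mathcal{T}}f(b)$. *)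

Set Implicit Arguments.

Record Quantale := {
  carrier :> Type;
  qle : carrier -> carrier -> Prop;
  qjoin : (carrier -> Prop) -> carrier;
  qmul : carrier -> carrier -> carrier;
  qunit : carrier;
  qle_refl : forall a, qle a a;
  qle_trans : forall a b c, qle a b -> qle b c -> qle a c;
  qle_antisym : forall a b, qle a b -> qle b a -> a = b;
  qjoin_ub : forall (P : carrier -> Prop) a, P a -> qle a (qjoin P);
  qjoin_least : forall (P : carrier -> Prop) b,
      (forall a, P a -> qle a b) -> qle (qjoin P) b;
  qmulA : forall a b c, qmul a (qmul b c) = qmul (qmul a b) c;
  qmul1l : forall a, qmul qunit a = a;
  qmul1r : forall a, qmul a qunit = a;
  qmul_monol : forall a a' b, qle a a' -> qle (qmul a b) (qmul a' b);
  qmul_monor : forall a b b', qle b b' -> qle (qmul a b) (qmul a b');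
  qmul_joinl : forall (P : carrier -> Prop) b,
      qmul (qjoin P) b = qjoin (fun c => exists a, P a /\ c = qmul a b);
  qmul_joinr : forall a (P : carrier -> Prop),
      qmul a (qjoin P) = qjoin (fun c => exists b, P b /\ c = qmul a b)
}.

Arguments qle {q}.
Arguments qjoin {q}.
Arguments qmul {q}.
Arguments qunit {q}.

Definition image {X Y : Type} (f : X -> Y) (P : X -> Prop) : Y -> Prop :=
  fun y => exists x, P x /\ y = f x.

Definition monotone {X Y : Quantale} (f : X -> Y) : Prop :=
  forall a b, qle a b -> qle (f a) (f b).

Definition join_preserving {X Y : Quantale} (f : X -> Y) : Prop :=
  forall P : X -> Prop, f (qjoin P) = qjoin (image f P).

Definition oplax_monoidal {X Y : Quantale} (f : X -> Y) : Prop :=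
  monotone f /\ qle (f qunit) qunit /\
  forall a b, qle (f (qmul a b)) (qmul (f a) (f b)).

Definition strict_monoidal {X Y : Quantale} (f : X -> Y) : Prop :=
  monotone f /\ f qunit = qunit /\
  forall a b, f (qmul a b) = qmul (f a) (f b).

Definition is_spacetime {X : Quantale} (nabla : X -> X) : Prop :=
  join_preserving nabla /\ oplax_monoidal nabla.

(** Right adjoint Box of a join-preserving nabla: Box x = join {c | nabla c <= x}. *)
Definition box {X : Quantale} (nabla : X -> X) (x : X) : X :=
  qjoin (fun c => qle (nabla c) x).

(** Right adjoint of a ⊗ (-): (a ⇒ b) = join {c | a ⊗ c <= b}. *)
Definition qimp {X : Quantale} (a b : X) : X :=
  qjoin (fun c => qle (qmul a c) b).

Definition st_imp {X : Quantale} (nabla : X -> X) (a b : X) : X :=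
  box nabla (qimp a b).

Definition geometric_map {X Y : Quantale} (nS : X -> X) (nT : Y -> Y)
    (f : X -> Y) : Prop :=
  join_preserving f /\ strict_monoidal f /\ forall a, f (nS a) = nT (f a).

Definition logical_map {X Y : Quantale} (nS : X -> X) (nT : Y -> Y)
    (f : X -> Y) : Prop :=
  geometric_map nS nT f /\
  forall a b, f (st_imp nS a b) = st_imp nT (f a) (f b).

Definition order_embedding {X Y : Quantale} (f : X -> Y) : Prop :=
  forall a b, qle (f a) (f b) -> qle a b.

Definition left_adjoint {X Y : Quantale} (g : Y -> X) (f : X -> Y) : Prop :=
  forall y x, qle (g y) x <-> qle y (f x).

From Stdlib Require Import Setoid.

Set Implicit Arguments.

(* Take nabla := f o nabla_S o f_!. It preserves joins as a composite of
   join-preserving maps; it is oplax because the unit y <= f (f_! y) lets the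
   oplaxity of nabla_S pass through the strict monoidal f; and f_! o f = id
   (f reflects the order) makes f geometric. Logicality is checked on lower
   sets: through the adjunctions f_! -| f, nabla -| Box and a (x) - -| a => -,
   y <= f (a ->_S b) and y <= f a ->_T f b are both equivalent to
   f (a (x) nabla_S (f_! y)) <= f b, the first because f reflects the order. *)

Lemma qle_lower_ext (X : Quantale) (a b : X) :
  (forall y : X, qle y a <-> qle y b) -> a = b.
Proof.
  intro Hab. apply qle_antisym; apply Hab, qle_refl.
Qed.

Lemma qjoin_ext (X : Quantale) (P Q : X -> Prop) :
  (forall a, P a <-> Q a) -> qjoin P = qjoin Q.
Proof.
  intro HPQ. apply qle_antisym; apply qjoin_least; intros a Ha;
    apply qjoin_ub, HPQ, Ha.
Qed.

Lemma join_preserving_monotone (X Y : Quantale) (h : X -> Y) :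
  join_preserving h -> monotone h.
Proof.
  intros Hh a b Hab.
  assert (Hb : qjoin (fun z => z = a \/ z = b) = b).
  { apply qle_antisym.
    - apply qjoin_least; intros z [-> | ->]; [exact Hab | apply qle_refl].
    - apply qjoin_ub; now right. }
  rewrite <- Hb, Hh. apply qjoin_ub. exists a; split; [now left | reflexivity].
Qed.

Lemma join_preserving_comp (X Y Z : Quantale) (h : Y -> Z) (k : X -> Y) :
  join_preserving h -> join_preserving k -> join_preserving (fun x => h (k x)).
Proof.
  intros Hh Hk P. rewrite Hk, Hh. apply qjoin_ext; intro z; split.
  - intros [y [[x [Hx ->]] ->]]. now exists x.
  - intros [x [Hx ->]]. exists (k x); split; [now exists x | reflexivity].
Qed.

Lemma qimp_galois (X : Quantale) (a b c : X) :
  qle (qmul a c) b <-> qle c (qimp a b).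
Proof.
  split; intro Hc.
  - now apply qjoin_ub.
  - eapply qle_trans; [apply qmul_monor, Hc |].
    unfold qimp; rewrite qmul_joinr.
    apply qjoin_least. now intros y [z [Hz ->]].
Qed.

Lemma box_galois (X : Quantale) (nabla : X -> X) (c x : X) :
  join_preserving nabla -> (qle (nabla c) x <-> qle c (box nabla x)).
Proof.
  intro Hn; split; intro Hc.
  - now apply qjoin_ub.
  - eapply qle_trans; [apply (join_preserving_monotone Hn), Hc |].
    unfold box; rewrite Hn.
    apply qjoin_least. now intros y [z [Hz ->]].
Qed.

Lemma st_imp_galois (X : Quantale) (nabla : X -> X) (a b c : X) :
  join_preserving nabla ->
  (qle (qmul a (nabla c)) b <-> qle c (st_imp nabla a b)).
Proof.
  intro Hn. unfold st_imp. rewrite <- box_galois by exact Hn.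
  apply qimp_galois.
Qed.

Section Adjunction.

Variables (X Y : Quantale) (f : X -> Y) (g : Y -> X).
Hypothesis Hgf : left_adjoint g f.

Lemma left_adjoint_unit (y : Y) : qle y (f (g y)).
Proof. apply Hgf, qle_refl. Qed.

Lemma left_adjoint_counit (x : X) : qle (g (f x)) x.
Proof. apply Hgf, qle_refl. Qed.

Lemma left_adjoint_monotone : monotone g.
Proof.
  intros y y' Hy. apply Hgf.
  eapply qle_trans; [exact Hy | apply left_adjoint_unit].
Qed.

Lemma right_adjoint_monotone : monotone f.
Proof.
  intros x x' Hx. apply Hgf.
  eapply qle_trans; [apply left_adjoint_counit | exact Hx].
Qed.

Lemma left_adjoint_join_preserving : join_preserving g.
Proof.
  intro P. apply qle_antisym.
  - apply Hgf, qjoin_least. intros y Hy.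
    eapply qle_trans; [apply left_adjoint_unit |].
    apply right_adjoint_monotone, qjoin_ub. now exists y.
  - apply qjoin_least. intros x [y [Hy ->]].
    now apply left_adjoint_monotone, qjoin_ub.
Qed.

Lemma order_embedding_cancel : order_embedding f -> forall x, g (f x) = x.
Proof.
  intros Hemb x. apply qle_antisym; [apply left_adjoint_counit |].
  apply Hemb, left_adjoint_unit.
Qed.

End Adjunction.

Section InducedSpacetime.

Variables (X Y : Quantale) (nablaS : X -> X) (f : X -> Y) (g : Y -> X).
Hypotheses (HS : is_spacetime nablaS) (Hfj : join_preserving f)
  (Hfs : strict_monoidal f) (Hemb : order_embedding f)
  (Hgf : left_adjoint g f).

Definition induced_nabla (y : Y) : Y := f (nablaS (g y)).

Lemma induced_nabla_join_preserving : join_preserving induced_nabla.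
Proof.
  unfold induced_nabla. apply join_preserving_comp; [exact Hfj |].
  apply join_preserving_comp; [exact (proj1 HS) |].
  exact (left_adjoint_join_preserving Hgf).
Qed.

Lemma induced_nabla_oplax_monoidal : oplax_monoidal induced_nabla.
Proof.
  destruct HS as [HSj [_ [HS1 HSmul]]]. destruct Hfs as [_ [Hf1 Hfmul]].
  assert (HSm : monotone nablaS) by exact (join_preserving_monotone HSj).
  assert (Hfm : monotone f) by exact (right_adjoint_monotone Hgf).
  split; [exact (join_preserving_monotone induced_nabla_join_preserving) |].
  unfold induced_nabla; split.
  - rewrite <- Hf1. apply Hfm. eapply qle_trans; [| exact HS1].
    apply HSm, Hgf. rewrite Hf1. apply qle_refl.
  - intros a b. rewrite <- Hfmul. apply Hfm.
    eapply qle_trans; [| apply HSmul]. apply HSm, Hgf. rewrite Hfmul.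
    apply qle_trans with (qmul (f (g a)) b).
    + apply qmul_monol, left_adjoint_unit, Hgf.
    + apply qmul_monor, left_adjoint_unit, Hgf.
Qed.

Lemma induced_nabla_is_spacetime : is_spacetime induced_nabla.
Proof.
  split; [exact induced_nabla_join_preserving | exact induced_nabla_oplax_monoidal].
Qed.

Lemma induced_nabla_geometric : geometric_map nablaS induced_nabla f.
Proof.
  split; [exact Hfj | split; [exact Hfs |]].
  intro a. unfold induced_nabla. now rewrite (order_embedding_cancel Hgf Hemb).
Qed.

Lemma induced_nabla_st_imp (a b : X) :
  f (st_imp nablaS a b) = st_imp induced_nabla (f a) (f b).
Proof.
  destruct HS as [HSj _]. destruct Hfs as [Hfm [_ Hfmul]].
  apply qle_lower_ext; intro y.
  rewrite <- st_imp_galois by exact induced_nabla_join_preserving.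
  rewrite <- (Hgf y), <- st_imp_galois by exact HSj.
  unfold induced_nabla. rewrite <- Hfmul.
  split; [apply Hfm | apply Hemb].
Qed.

End InducedSpacetime.

Theorem corollary5p13 (X Y : Quantale) (nablaS : X -> X) (f : X -> Y) :
  is_spacetime nablaS ->
  join_preserving f -> strict_monoidal f -> order_embedding f ->
  (exists f_shriek : Y -> X, left_adjoint f_shriek f) ->
  exists nabla : Y -> Y, is_spacetime nabla /\ logical_map nablaS nabla f.
Proof.
  intros HS Hfj Hfs Hemb [g Hgf].
  exists (induced_nabla _ _ nablaS f g).
  split; [| split]; [ apply induced_nabla_is_spacetime
                    | apply induced_nabla_geometric
                    | intros a b; apply induced_nabla_st_imp ]; assumption.
Qed.
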